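(* Let $T_{init}$ be the number of nodes of the initial tree. The expected optimization time of (1+1) GP-single on MO-WMAJORITY is $O(T_{init}+n\log n)$.
   Context: Fix an integer $n\ge 1$ and real weights $w_1\ge w_2\ge\dots\ge w_n>0$. The terminal set is $T=\{x_1,\bar x_1,\dots,x_n,\bar x_n\}$ ($\bar x_i$ is the complement of $x_i$; $x_i$ is called positive). A syntax tree is either the empty tree or a rooted ordered binary tree whose inner nodes are all labelled by the binary function $J$ (join, exactly two ordered children) and whose leaves are labelled by elements of $T$. The complexity $C(X)$ is the number of nodes of $X$ (0 for the empty tree). The leaf list $l$ of $X$ is the sequence of leaf labels in an inorder traversal. WMAJORITY: WMAJORITY$(X)=\sum w_i$ over all $i$ such that $x_i$ occurs in $l$ at least once and at least as often as $\bar x_i$. MO-WMAJORITY$(X)=(\mathrm{WMAJORITY}(X),C(X))$, WMAJORITY to be maximized and $C$ minimized. Mutation (HVL-Prime applied $k$ times): each application chooses uniformly at random one of three operations. Substitute: replace a uniformly random leaf by a uniformly random $u\in T$. Insert: choose a uniformly random node $v$ and uniformly random $u\in T$, replace $v$ by a $J$-node with children $u$ and $v$ in uniformly random order (inserting into the empty tree yields the single leaf $u$). Delete: choose a uniformly random leaf $v$ with parent $p$ and sibling $u$, replace $p$ by $u$ (deleting $p$ and $v$; deleting the only leaf of a one-leaf tree yields the empty tree). Single-operation mutation uses $k=1$. (1+1) GP-single on MO-$F$: start with an initial tree $X$; in each iteration let $Y$ be $X$ mutated with $k=1$, and set $X:=Y$ iff $F(Y)>F(X)$, or $F(Y)=F(X)$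 and $C(Y)\le C(X)$. Expected optimization time: expected number of iterations (fitness evaluations) until the current solution is for the first time optimal, i.e. has maximum possible $F$-value and, among such trees, minimum complexity. *)

From Stdlib Require Import Reals List Arith Lia ClassicalDescription.
Open Scope R_scope.

(* Literal (i, true) = x_(i+1), (i, false) = complement of x_(i+1); indices 0..n-1. *)
Definition lit := (nat * bool)%type.

(* Non-empty syntax trees; the possibly-empty tree is [option stree]. *)
Inductive stree : Type :=
| Leaf (i : nat) (pos : bool)
| J (a b : stree).

Definition tree := option stree.

Fixpoint ssize (s : stree) : nat :=
  match s with Leaf _ _ => 1%nat | J a b => S (ssize a + ssize b) end.

Definition cplx (X : tree) : nat := match X with None => 0%nat | Some s => ssize s end.

Fixpoint leaves (s : stree) : list lit :=
  match s with Leaf i b => (i, b) :: nil | J a b => leaves a ++ leaves b end.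

Definition leaflist (X : tree) : list lit :=
  match X with None => nil | Some s => leaves s end.

Definition nleaves (s : stree) : nat := length (leaves s).

Definition terminals (n : nat) : list lit :=
  flat_map (fun i => (i, true) :: (i, false) :: nil) (seq 0 n).

Definition valid (n : nat) (X : tree) : Prop :=
  forall l, In l (leaflist X) -> (fst l < n)%nat.

Definition occ (i : nat) (b : bool) (X : tree) : nat :=
  length (filter (fun l : lit => andb (Nat.eqb (fst l) i) (Bool.eqb (snd l) b)) (leaflist X)).

Definition wmaj (n : nat) (w : nat -> R) (X : tree) : R :=
  fold_right Rplus 0
    (map (fun i => if andb (Nat.leb 1 (occ i true X)) (Nat.leb (occ i false X) (occ i true X))
                   then w i else 0) (seq 0 n)).

(* Substitute: replace the j-th leaf (inorder, 0-based) by u *)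
Fixpoint subst_at (s : stree) (j : nat) (u : lit) : stree :=
  match s with
  | Leaf _ _ => Leaf (fst u) (snd u)
  | J a b => if Nat.ltb j (nleaves a) then J (subst_at a j u) b
             else J a (subst_at b (j - nleaves a) u)
  end.

(* Insert: replace the k-th node (preorder, 0-based) v by J(u,v) (b = true)
   or J(v,u) (b = false) *)
Fixpoint insert_at (s : stree) (k : nat) (u : lit) (b : bool) : stree :=
  let new v := if b then J (Leaf (fst u) (snd u)) v else J v (Leaf (fst u) (snd u)) in
  match k with
  | O => new s
  | S k' =>
    match s with
    | Leaf _ _ => new s
    | J a c => if Nat.ltb k' (ssize a) then J (insert_at a k' u b) c
               else J a (insert_at c (k' - ssize a) u b)
    end
  end.

(* Delete: remove the j-th leaf v, its parent p being replaced by the sibling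
   of v; deleting the only leaf of a one-leaf tree yields the empty tree. *)
Fixpoint delete_at (s : stree) (j : nat) : tree :=
  match s with
  | Leaf _ _ => None
  | J a b =>
    if Nat.ltb j (nleaves a) then
      match delete_at a j with None => Some b | Some a' => Some (J a' b) end
    else
      match delete_at b (j - nleaves a) with None => Some a | Some b' => Some (J a b') end
  end.

(* One application of HVL-Prime (k = 1), as a finite list of
   (probability, outcome) pairs. Each of the three operations has prob 1/3. *)
Definition mutate (n : nat) (X : tree) : list (R * tree) :=
  let T := terminals n in
  let m := INR (length T) in
  match X with
  | None =>
      (* substitute / delete have no leaf to act on: the tree is unchanged *)
      ((/3, None) :: nil)
      ++ map (fun u => (/3 * /m, Some (Leaf (fst u) (snd u)))) T
      ++ ((/3, None) :: nil)
  | Some s =>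
      let L := INR (nleaves s) in
      let K := INR (ssize s) in
      flat_map (fun j => map (fun u => (/3 * /L * /m, Some (subst_at s j u))) T)
               (seq 0 (nleaves s))
      ++ flat_map (fun k => flat_map (fun u =>
              map (fun b => (/3 * /K * /m * /2, Some (insert_at s k u b)))
                  (true :: false :: nil)) T)
           (seq 0 (ssize s))
      ++ map (fun j => (/3 * /L, delete_at s j)) (seq 0 (nleaves s))
  end.

Definition accept (n : nat) (w : nat -> R) (X Y : tree) : bool :=
  if Rlt_dec (wmaj n w X) (wmaj n w Y) then true
  else if Req_EM_T (wmaj n w Y) (wmaj n w X) then Nat.leb (cplx Y) (cplx X)
  else false.

Definition optimal (n : nat) (w : nat -> R) (X : tree) : Prop :=
  (forall Y, valid n Y -> wmaj n w Y <= wmaj n w X) /\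
  (forall Y, valid n Y -> wmaj n w Y = wmaj n w X -> (cplx X <= cplx Y)%nat).

(* surv n w t X = Pr[X_0, ..., X_t are all non-optimal] for the run started
   at X_0 = X, i.e. Pr[T_opt > t]. *)
Fixpoint surv (n : nat) (w : nat -> R) (t : nat) (X : tree) : R :=
  if excluded_middle_informative (optimal n w X) then 0 else
  match t with
  | O => 1
  | S t' =>
      fold_right Rplus 0
        (map (fun pY => fst pY *
                 surv n w t' (if accept n w X (snd pY) then snd pY else X))
             (mutate n X))
  end.

(* Partial sums of E[T_opt] = sum_{t >= 0} Pr[T_opt > t]. *)
Definition exp_time_partial (n : nat) (w : nat -> R) (X : tree) (N : nat) : R :=
  fold_right Rplus 0 (map (fun t => surv n w t X) (seq 0 N)).

(** Proof idea (potential-based additive drift).  Everything a mutation does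
    is visible on the leaf list: substitution replaces one literal, insertion
    adds one, deletion removes one.  For a leaf list [l] let the potential be
    [Phi(l) = |l| + 2 * #unexpressed variables - n]; it is 0 only for
    optimal trees, and accepted mutations never increase it.  A counting
    argument per variable shows [Phi <= 4 * #safe leaves + 2 * #absent
    positive literals], where deleting a safe leaf or inserting an absent
    positive literal is accepted and lowers [Phi].  Hence at potential [m]
    an improving step has probability [Omega(m / (m + n))], so the drift
    function [G(m) = 12 (m + n H_m)] decreases by at least 1 in expectation
    per iteration.  The additive drift theorem then bounds the expected time
    by [G(Phi(X_0)) <= G(C(X_0) + n) = O(C(X_0) + n log n)]. *)

From Stdlib Require Import Reals List Arith Lia Lra ClassicalDescription.
Open Scope R_scope.

Definition sumR {A} (l : list A) (f : A -> R) : R := fold_right Rplus 0 (map f l).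

Lemma sumR_app {A} (l1 l2 : list A) f : sumR (l1 ++ l2) f = sumR l1 f + sumR l2 f.
Proof. induction l1 as [|x l1 IH]; unfold sumR in *; simpl; [lra|]. rewrite IH; lra. Qed.

Lemma sumR_map {A B} (g : A -> B) l f : sumR (map g l) f = sumR l (fun x => f (g x)).
Proof. unfold sumR; rewrite map_map; reflexivity. Qed.

Lemma sumR_flat_map {A B} (g : A -> list B) l f :
  sumR (flat_map g l) f = sumR l (fun x => sumR (g x) f).
Proof. induction l as [|x l IH]; simpl; [reflexivity|]. rewrite sumR_app, IH; reflexivity. Qed.

Lemma sumR_ext {A} (l : list A) f g :
  (forall x, In x l -> f x = g x) -> sumR l f = sumR l g.
Proof.
  induction l as [|x l IH]; intros H; unfold sumR in *; simpl; [reflexivity|].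
  f_equal; auto with datatypes.
Qed.

Lemma sumR_le {A} (l : list A) f g :
  (forall x, In x l -> f x <= g x) -> sumR l f <= sumR l g.
Proof.
  induction l as [|x l IH]; intros H; unfold sumR in *; simpl; [lra|].
  apply Rplus_le_compat; auto with datatypes.
Qed.

Lemma sumR_plus {A} (l : list A) f g : sumR l (fun x => f x + g x) = sumR l f + sumR l g.
Proof. induction l as [|x l IH]; unfold sumR in *; simpl; [lra|]. rewrite IH; lra. Qed.

Lemma sumR_minus {A} (l : list A) f g : sumR l (fun x => f x - g x) = sumR l f - sumR l g.
Proof. induction l as [|x l IH]; unfold sumR in *; simpl; [lra|]. rewrite IH; lra. Qed.

Lemma sumR_scal {A} (l : list A) c f : sumR l (fun x => c * f x) = c * sumR l f.
Proof. induction l as [|x l IH]; unfold sumR in *; simpl; [lra|]. rewrite IH; lra. Qed.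

Lemma sumR_const {A} (l : list A) c : sumR l (fun _ => c) = INR (length l) * c.
Proof.
  induction l as [|x l IH]; [unfold sumR; simpl; lra|].
  change (c + sumR l (fun _ => c) = INR (S (length l)) * c). rewrite IH, S_INR; lra.
Qed.

Lemma sumR_nonneg {A} (l : list A) f : (forall x, In x l -> 0 <= f x) -> 0 <= sumR l f.
Proof.
  intros H. replace 0 with (sumR l (fun _ => 0)) by (rewrite sumR_const; lra).
  apply sumR_le; auto.
Qed.

Lemma sumR_ge_term {A} (l : list A) f k :
  (forall x, In x l -> 0 <= f x) -> In k l -> f k <= sumR l f.
Proof.
  induction l as [|x l IH]; intros H Hk; [contradiction|].
  change (f k <= f x + sumR l f).
  assert (0 <= f x) by auto with datatypes.
  assert (0 <= sumR l f) by (apply sumR_nonneg; auto with datatypes).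
  destruct Hk as [<-|Hk]; [lra|].
  assert (f k <= sumR l f) by (apply IH; auto with datatypes). lra.
Qed.

Lemma sumR_swap {A B} (l1 : list A) (l2 : list B) f :
  sumR l1 (fun x => sumR l2 (fun y => f x y)) = sumR l2 (fun y => sumR l1 (fun x => f x y)).
Proof.
  induction l1 as [|x l1 IH]; simpl.
  - replace 0 with (sumR l2 (fun _ => 0)) at 1 by (rewrite sumR_const; lra).
    apply sumR_ext; reflexivity.
  - change (sumR l2 (fun y => f x y) + sumR l1 (fun x => sumR l2 (fun y => f x y))
            = sumR l2 (fun y => f x y + sumR l1 (fun x => f x y))).
    rewrite IH, sumR_plus. reflexivity.
Qed.

Lemma sumR_seq_single m : forall a k f, (forall i, i <> k -> f i = 0) ->
  (a <= k < a + m)%nat -> sumR (seq a m) f = f k.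
Proof.
  induction m as [|m IH]; intros a k f H Hk; [lia|].
  simpl seq. change (sumR (a :: ?l) f) with (f a + sumR l f).
  destruct (Nat.eq_dec a k) as [<-|Hne].
  - replace (sumR (seq (S a) m) f) with 0; [lra|].
    replace 0 with (sumR (seq (S a) m) (fun _ => 0)) by (rewrite sumR_const; lra).
    apply sumR_ext. intros x Hx. apply in_seq in Hx. symmetry; apply H. lia.
  - rewrite H by auto. rewrite (IH (S a) k f H) by lia. lra.
Qed.

Lemma sumR_nth {A} (l : list A) d f :
  sumR (seq 0 (length l)) (fun j => f (nth j l d)) = sumR l f.
Proof.
  induction l as [|x l IH]; [reflexivity|]. simpl length. simpl seq.
  rewrite <- seq_shift. unfold sumR in *; simpl. rewrite map_map in *. rewrite IH. reflexivity.
Qed.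

Lemma INR_length_filter {A} (P : A -> bool) l :
  INR (length (filter P l)) = sumR l (fun i => if P i then 1 else 0).
Proof.
  induction l as [|x l IH]; [reflexivity|]. unfold sumR in *; simpl.
  destruct (P x); simpl length; [rewrite S_INR|]; rewrite IH; lra.
Qed.

Lemma INR_as_sum n : INR n = sumR (seq 0 n) (fun _ => 1).
Proof. rewrite sumR_const, length_seq; lra. Qed.

Lemma sumR_change_one n (f g : nat -> R) k : (k < n)%nat ->
  (forall i, i <> k -> f i = g i) ->
  sumR (seq 0 n) f - f k = sumR (seq 0 n) g - g k.
Proof.
  intros Hk H.
  assert (sumR (seq 0 n) (fun x => f x - g x) = f k - g k).
  { apply (sumR_seq_single n 0 k (fun x => f x - g x)); [|lia].
    intros i Hi; rewrite H; auto; lra. }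
  rewrite sumR_minus in H0. lra.
Qed.

Implicit Types (x u : lit) (l : list lit).

Definition lit_is (i : nat) (b : bool) (x : lit) : bool :=
  andb (Nat.eqb (fst x) i) (Bool.eqb (snd x) b).

Definition count_lit (l : list lit) i b : nat := length (filter (lit_is i b) l).

Lemma count_lit_app l1 l2 i b :
  count_lit (l1 ++ l2) i b = (count_lit l1 i b + count_lit l2 i b)%nat.
Proof. unfold count_lit. rewrite filter_app, length_app. reflexivity. Qed.

Lemma count_lit_cons x l i b :
  count_lit (x :: l) i b = ((if lit_is i b x then 1 else 0) + count_lit l i b)%nat.
Proof. unfold count_lit; simpl. destruct (lit_is i b x); reflexivity. Qed.

Lemma count_lit_insert l1 l2 x i b :
  count_lit (l1 ++ x :: l2) i b = ((if lit_is i b x then 1 else 0) + count_lit (l1 ++ l2) i b)%nat.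
Proof. rewrite !count_lit_app, count_lit_cons. lia. Qed.

Lemma lit_is_other i b x : i <> fst x -> lit_is i b x = false.
Proof. intros H; unfold lit_is. destruct (Nat.eqb_spec (fst x) i); [congruence|reflexivity]. Qed.

Lemma lit_is_pos x : lit_is (fst x) true x = snd x.
Proof. destruct x as [k []]; unfold lit_is; simpl; rewrite Nat.eqb_refl; reflexivity. Qed.

Lemma lit_is_neg x : lit_is (fst x) false x = negb (snd x).
Proof. destruct x as [k []]; unfold lit_is; simpl; rewrite Nat.eqb_refl; reflexivity. Qed.

Definition expressed_counts (p q : nat) : bool := andb (Nat.leb 1 p) (Nat.leb q p).
Definition expressed l i := expressed_counts (count_lit l i true) (count_lit l i false).

Definition fitness n (w : nat -> R) l : R :=
  sumR (seq 0 n) (fun i => if expressed l i then w i else 0).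

Lemma wmaj_fitness n w X : wmaj n w X = fitness n w (leaflist X).
Proof. reflexivity. Qed.

Definition n_unexpressed n l : nat := length (filter (fun i => negb (expressed l i)) (seq 0 n)).

(* It is 0 exactly
   for leaf lists consisting of the n positive literals, and it decreases on
   every accepted step that changes it (see [Acceptance] below). *)
Definition potential n l : nat := (length l + 2 * n_unexpressed n l - n)%nat.

Definition valid_list n (l : list lit) := forall x, In x l -> (fst x < n)%nat.

Lemma valid_nil n : valid_list n nil.
Proof. intros x []. Qed.

Lemma valid_list_app n l1 l2 : valid_list n (l1 ++ l2) <-> valid_list n l1 /\ valid_list n l2.
Proof.
  unfold valid_list. split.
  - intros H; split; intros; apply H; apply in_or_app; auto.
  - intros [H1 H2] x Hx. apply in_app_or in Hx as [|]; auto.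
Qed.

Lemma valid_list_insert n l1 l2 x :
  valid_list n (l1 ++ l2) -> (fst x < n)%nat -> valid_list n (l1 ++ x :: l2).
Proof.
  intros H Hx. apply valid_list_app in H as [H1 H2]. apply valid_list_app; split; auto.
  intros y [<-|Hy]; auto.
Qed.

Lemma valid_list_remove n l1 l2 x :
  valid_list n (l1 ++ x :: l2) -> valid_list n (l1 ++ l2) /\ (fst x < n)%nat.
Proof.
  intros H. apply valid_list_app in H as [H1 H2]. split.
  - apply valid_list_app; split; auto. intros y Hy; apply H2; simpl; auto.
  - apply H2; simpl; auto.
Qed.

Lemma sumR_by_variable n l f : valid_list n l ->
  sumR l f = sumR (seq 0 n) (fun i =>
    INR (count_lit l i true) * f (i, true) + INR (count_lit l i false) * f (i, false)).
Proof.
  induction l as [|x l IH]; intros Hv.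
  - replace 0 with (sumR (seq 0 n) (fun _ => 0)) at 1 by (rewrite sumR_const; lra).
    apply sumR_ext; intros; unfold count_lit; simpl; lra.
  - change (f x + sumR l f = sumR (seq 0 n) (fun i =>
      INR (count_lit (x :: l) i true) * f (i, true)
      + INR (count_lit (x :: l) i false) * f (i, false))).
    rewrite IH by (intros y Hy; apply Hv; simpl; auto).
    assert (Hx : (fst x < n)%nat) by (apply Hv; simpl; auto).
    set (here := fun i => (if lit_is i true x then 1 else 0) * f (i, true)
                        + (if lit_is i false x then 1 else 0) * f (i, false)).
    assert (Hhere : sumR (seq 0 n) here = f x).
    { rewrite (sumR_seq_single n 0 (fst x)) by
        (lia || (intros i Hi; unfold here; rewrite !lit_is_other by auto; lra)).
      unfold here. rewrite lit_is_pos, lit_is_neg. destruct x as [k []]; simpl; lra. }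
    rewrite <- Hhere, <- sumR_plus. apply sumR_ext. intros i _. unfold here.
    rewrite !count_lit_cons, !plus_INR. destruct (lit_is i true x), (lit_is i false x); simpl; lra.
Qed.

Lemma INR_n_unexpressed n l :
  INR (n_unexpressed n l) = sumR (seq 0 n) (fun i => if expressed l i then 0 else 1).
Proof.
  unfold n_unexpressed. rewrite INR_length_filter.
  apply sumR_ext; intros; destruct (expressed l x); reflexivity.
Qed.

Lemma INR_length_by_variable n l : valid_list n l ->
  INR (length l) = sumR (seq 0 n) (fun i => INR (count_lit l i true) + INR (count_lit l i false)).
Proof.
  intros Hv. rewrite <- (Rmult_1_r (INR (length l))), <- sumR_const.
  rewrite (sumR_by_variable n l (fun _ => 1) Hv). apply sumR_ext; intros; lra.
Qed.

Lemma n_unexpressed_le n l : (n_unexpressed n l <= n)%nat.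
Proof. unfold n_unexpressed. rewrite <- (length_seq n 0) at 2. apply filter_length_le. Qed.

(* Every expressed variable occupies at least one leaf, so the subtraction in
   [potential] never truncates. *)
Lemma n_le_length_unexpressed n l : valid_list n l -> (n <= length l + n_unexpressed n l)%nat.
Proof.
  intros Hv. apply INR_le.
  rewrite plus_INR, INR_n_unexpressed, INR_length_by_variable with (n := n) by auto.
  rewrite INR_as_sum, <- sumR_plus. apply sumR_le. intros i _.
  pose proof (pos_INR (count_lit l i false)); pose proof (pos_INR (count_lit l i true)).
  unfold expressed, expressed_counts.
  destruct (Nat.leb_spec 1 (count_lit l i true)) as [E|E]; simpl; [|lra].
  destruct (Nat.leb _ _); [apply le_INR in E; simpl in E|]; lra.
Qed.

Lemma potential_bounds n l :
  (length l <= potential n l + n)%nat /\ (potential n l <= length l + n)%nat.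
Proof. pose proof (n_unexpressed_le n l). unfold potential. lia. Qed.

Lemma ssize_nleaves s : S (ssize s) = (2 * length (leaves s))%nat.
Proof. induction s; simpl; [reflexivity|]. rewrite length_app. lia. Qed.

Lemma nleaves_pos s : (1 <= nleaves s)%nat.
Proof. pose proof (ssize_nleaves s). unfold nleaves. lia. Qed.

Lemma ssize_pos s : (1 <= ssize s)%nat.
Proof. pose proof (ssize_nleaves s); pose proof (nleaves_pos s). unfold nleaves in *. lia. Qed.

Lemma cplx_leaflist X : cplx X = (2 * length (leaflist X) - 1)%nat.
Proof. destruct X as [s|]; simpl; [pose proof (ssize_nleaves s); lia|reflexivity]. Qed.

Lemma leaves_subst_at s : forall j u, (j < nleaves s)%nat -> exists l1 a l2,
  leaves s = l1 ++ a :: l2 /\ leaves (subst_at s j u) = l1 ++ (fst u, snd u) :: l2.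
Proof.
  induction s as [i b|a IHa c IHc]; intros j u Hj.
  - exists nil, (i, b), nil. simpl. auto.
  - unfold nleaves in Hj; simpl in Hj; rewrite length_app in Hj. simpl.
    destruct (Nat.ltb_spec j (nleaves a)).
    + destruct (IHa j u H) as (l1 & x & l2 & E1 & E2). exists l1, x, (l2 ++ leaves c).
      simpl. rewrite E1, E2, <- !app_assoc. auto.
    + destruct (IHc (j - nleaves a)%nat u) as (l1 & x & l2 & E1 & E2); [unfold nleaves in *; lia|].
      exists (leaves a ++ l1), x, l2. simpl. rewrite E1, E2, <- !app_assoc. auto.
Qed.

Lemma leaves_insert_at s : forall k u b, exists l1 l2,
  leaves s = l1 ++ l2 /\ leaves (insert_at s k u b) = l1 ++ (fst u, snd u) :: l2.
Proof.
  assert (Hnew : forall v (u : lit) (b : bool), exists l1 l2, leaves v = l1 ++ l2 /\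
     leaves (if b then J (Leaf (fst u) (snd u)) v else J v (Leaf (fst u) (snd u)))
     = l1 ++ (fst u, snd u) :: l2).
  { intros v u []; [exists nil, (leaves v) | exists (leaves v), nil];
      simpl; rewrite ?app_nil_r; auto. }
  induction s as [i c|a IHa c IHc]; intros k u b; destruct k as [|k]; try exact (Hnew _ u b).
  cbn [insert_at]. destruct (Nat.ltb_spec k (ssize a)).
  - destruct (IHa k u b) as (l1 & l2 & E1 & E2). exists l1, (l2 ++ leaves c).
    simpl. rewrite E1, E2, <- !app_assoc. auto.
  - destruct (IHc (k - ssize a)%nat u b) as (l1 & l2 & E1 & E2).
    exists (leaves a ++ l1), l2. simpl. rewrite E1, E2, <- !app_assoc. auto.
Qed.

Lemma leaves_delete_at s : forall j, (j < nleaves s)%nat -> exists l1 a l2,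
  leaves s = l1 ++ a :: l2 /\ length l1 = j /\ leaflist (delete_at s j) = l1 ++ l2.
Proof.
  induction s as [i b|a IHa c IHc]; intros j Hj.
  - exists nil, (i, b), nil. unfold nleaves in Hj; simpl in *. repeat split. lia.
  - unfold nleaves in Hj; simpl in Hj; rewrite length_app in Hj. simpl.
    destruct (Nat.ltb_spec j (nleaves a)).
    + destruct (IHa j H) as (l1 & x & l2 & E1 & E2 & E3). exists l1, x, (l2 ++ leaves c).
      rewrite E1, <- !app_assoc. repeat split; auto.
      destruct (delete_at a j) as [a'|]; simpl in *.
      * rewrite E3, <- app_assoc. reflexivity.
      * destruct l1, l2; simpl in E3; try discriminate. reflexivity.
    + destruct (IHc (j - nleaves a)%nat) as (l1 & x & l2 & E1 & E2 & E3); [unfold nleaves in *; lia|].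
      exists (leaves a ++ l1), x, l2. rewrite E1, <- !app_assoc.
      repeat split; [rewrite length_app; unfold nleaves in *; lia|].
      destruct (delete_at c (j - nleaves a)) as [c'|]; simpl in *.
      * rewrite E3. reflexivity.
      * destruct l1, l2; simpl in E3; try discriminate. simpl. rewrite app_nil_r. reflexivity.
Qed.

Lemma terminals_valid n u : In u (terminals n) -> (fst u < n)%nat.
Proof.
  unfold terminals. intros H. apply in_flat_map in H as (i & Hi & H).
  apply in_seq in Hi. simpl in H. destruct H as [<-|[<-|[]]]; simpl; lia.
Qed.

Lemma terminals_length n : INR (length (terminals n)) = 2 * INR n.
Proof.
  replace (length (terminals n)) with (2 * n)%nat; [rewrite mult_INR; reflexivity|].
  unfold terminals. rewrite <- (length_seq n 0) at 1.
  generalize (seq 0 n). induction l; simpl; [reflexivity|]. rewrite <- IHl. lia.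
Qed.

Lemma sumR_terminals n f :
  sumR (terminals n) f = sumR (seq 0 n) (fun i => f (i, true) + f (i, false)).
Proof.
  unfold terminals. rewrite sumR_flat_map. apply sumR_ext. intros i _.
  unfold sumR; simpl; lra.
Qed.

(* The selection rule of (1+1) GP-single, expressed on leaf lists via
   [cplx = 2 |leaves| - 1]. *)
Definition accept_list n w (l l' : list lit) : bool :=
  if Rlt_dec (fitness n w l) (fitness n w l') then true
  else if Req_EM_T (fitness n w l') (fitness n w l)
       then Nat.leb (2 * length l' - 1) (2 * length l - 1)
  else false.

Lemma accept_leaflist n w X Y : accept n w X Y = accept_list n w (leaflist X) (leaflist Y).
Proof. unfold accept, accept_list. rewrite !cplx_leaflist. reflexivity. Qed.

Lemma accept_list_spec n w l l' :
  accept_list n w l l' = true <->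
  fitness n w l < fitness n w l' \/
  (fitness n w l' = fitness n w l /\ (length l' <= length l)%nat).
Proof.
  unfold accept_list. destruct (Rlt_dec _ _); [split; auto|].
  destruct (Req_EM_T _ _) as [E|E]; [|split; [discriminate|lra]].
  rewrite Nat.leb_le. split; [right; split; auto; lia|]. intros [|[_ ?]]; [lra|lia].
Qed.

Lemma expressed_insert_other l1 l2 x i :
  i <> fst x -> expressed (l1 ++ x :: l2) i = expressed (l1 ++ l2) i.
Proof.
  intros H. unfold expressed. rewrite !count_lit_insert, !lit_is_other by auto. reflexivity.
Qed.

(* Inserting the literal [x] only affects the status of the variable [fst x]:
   outside that variable, fitness and the number of unexpressed variables
   are unchanged. *)
Lemma insert_balance n w l1 l2 x : (fst x < n)%nat ->
  fitness n w (l1 ++ x :: l2) - (if expressed (l1 ++ x :: l2) (fst x) then w (fst x) else 0)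
  = fitness n w (l1 ++ l2) - (if expressed (l1 ++ l2) (fst x) then w (fst x) else 0) /\
  (n_unexpressed n (l1 ++ x :: l2) + (if expressed (l1 ++ x :: l2) (fst x) then 1 else 0)
   = n_unexpressed n (l1 ++ l2) + (if expressed (l1 ++ l2) (fst x) then 1 else 0))%nat.
Proof.
  intros Hx. split.
  - apply (sumR_change_one n (fun i => if expressed (l1 ++ x :: l2) i then w i else 0)
                             (fun i => if expressed (l1 ++ l2) i then w i else 0)); auto.
    intros i Hi. rewrite expressed_insert_other; auto.
  - apply INR_eq. rewrite !plus_INR, !INR_n_unexpressed.
    pose proof (sumR_change_one n (fun i => if expressed (l1 ++ x :: l2) i then 0 else 1)
                  (fun i => if expressed (l1 ++ l2) i then 0 else 1) (fst x) Hx) as E.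
    cbv beta in E. specialize (E ltac:(intros i Hi; rewrite expressed_insert_other; auto)).
    destruct (expressed (l1 ++ x :: l2) (fst x)), (expressed (l1 ++ l2) (fst x)); simpl; lra.
Qed.

(* A leaf is safe if removing it cannot make its variable unexpressed. *)
Definition safe_leaf (l : list lit) (x : lit) : bool :=
  implb (expressed l (fst x))
    (expressed_counts (count_lit l (fst x) true - (if snd x then 1 else 0))
                      (count_lit l (fst x) false - (if snd x then 0 else 1))).

Definition absent_pos (l : list lit) (u : lit) : bool :=
  andb (snd u) (andb (count_lit l (fst u) true =? 0) (count_lit l (fst u) false =? 0)).

Section Acceptance.
Variable n : nat.
Variable w : nat -> R.
Hypothesis w_pos : forall i, (i < n)%nat -> 0 < w i.

(* An accepted insertion must increase the fitness, hence it expresses its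
   variable, and the potential drops by exactly one. *)
Lemma accepted_insert_potential l1 l2 x : valid_list n (l1 ++ l2) -> (fst x < n)%nat ->
  accept_list n w (l1 ++ l2) (l1 ++ x :: l2) = true ->
  (potential n (l1 ++ x :: l2) + 1 = potential n (l1 ++ l2))%nat.
Proof.
  intros Hv Hx Ha.
  destruct (insert_balance n w l1 l2 x Hx) as [E1 E2].
  pose proof (n_le_length_unexpressed n _ (valid_list_insert n l1 l2 x Hv Hx)).
  pose proof (w_pos _ Hx).
  apply accept_list_spec in Ha. unfold potential in *. rewrite !length_app in *.
  simpl length in *. unfold lit in *.
  destruct (expressed (l1 ++ x :: l2) (fst x)), (expressed (l1 ++ l2) (fst x));
    [destruct Ha as [|[_ ?]]; [lra|lia] | lia | destruct Ha as [|[_ ?]]; [lra|lia]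
    | destruct Ha as [|[_ ?]]; [lra|lia]].
Qed.

Lemma absent_insert_accepted l1 l2 x : (fst x < n)%nat ->
  absent_pos (l1 ++ l2) x = true ->
  accept_list n w (l1 ++ l2) (l1 ++ x :: l2) = true.
Proof.
  intros Hx Habs. unfold absent_pos in Habs.
  apply andb_prop in Habs as [Hs Habs]. apply andb_prop in Habs as [H1 H2].
  apply Nat.eqb_eq in H1, H2.
  destruct (insert_balance n w l1 l2 x Hx) as [E1 _].
  pose proof (w_pos _ Hx).
  assert (Ea : expressed (l1 ++ l2) (fst x) = false)
    by (unfold expressed, expressed_counts; rewrite H1; reflexivity).
  assert (Eb : expressed (l1 ++ x :: l2) (fst x) = true).
  { unfold expressed, expressed_counts.
    rewrite !count_lit_insert, lit_is_pos, lit_is_neg, H1, H2, Hs. reflexivity. }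
  rewrite Ea, Eb in E1. apply accept_list_spec. left. lra.
Qed.

(* An accepted deletion cannot unexpress its variable, so the potential drops
   by at least one. *)
Lemma accepted_delete_potential l1 l2 x : valid_list n (l1 ++ x :: l2) ->
  accept_list n w (l1 ++ x :: l2) (l1 ++ l2) = true ->
  (potential n (l1 ++ l2) + 1 <= potential n (l1 ++ x :: l2))%nat.
Proof.
  intros Hv0 Ha. destruct (valid_list_remove n l1 l2 x Hv0) as [Hv Hx].
  destruct (insert_balance n w l1 l2 x Hx) as [E1 E2].
  pose proof (n_le_length_unexpressed n _ Hv).
  pose proof (w_pos _ Hx).
  apply accept_list_spec in Ha. unfold potential in *. rewrite !length_app in *.
  simpl length in *. unfold lit in *.
  destruct (expressed (l1 ++ x :: l2) (fst x)), (expressed (l1 ++ l2) (fst x));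
    [lia | destruct Ha as [|[? _]]; lra | lia | lia].
Qed.

(* Deleting a safe leaf never lowers the fitness and shortens the tree. *)
Lemma safe_delete_accepted l1 l2 x : valid_list n (l1 ++ x :: l2) ->
  safe_leaf (l1 ++ x :: l2) x = true ->
  accept_list n w (l1 ++ x :: l2) (l1 ++ l2) = true.
Proof.
  intros Hv0 Hs. destruct (valid_list_remove n l1 l2 x Hv0) as [Hv Hx].
  destruct (insert_balance n w l1 l2 x Hx) as [E1 _].
  assert (Hi : implb (expressed (l1 ++ x :: l2) (fst x)) (expressed (l1 ++ l2) (fst x)) = true).
  { unfold safe_leaf in Hs. unfold expressed at 2.
    replace (count_lit (l1 ++ l2) (fst x) true)
      with (count_lit (l1 ++ x :: l2) (fst x) true - (if snd x then 1 else 0))%nat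
      by (rewrite count_lit_insert, lit_is_pos; destruct (snd x); simpl; lia).
    replace (count_lit (l1 ++ l2) (fst x) false)
      with (count_lit (l1 ++ x :: l2) (fst x) false - (if snd x then 0 else 1))%nat
      by (rewrite count_lit_insert, lit_is_neg; destruct (snd x); simpl; lia).
    exact Hs. }
  apply accept_list_spec. rewrite !length_app. simpl length. unfold lit in *.
  pose proof (w_pos _ Hx).
  destruct (expressed (l1 ++ x :: l2) (fst x)), (expressed (l1 ++ l2) (fst x));
    simpl in Hi; try discriminate; [right; split; [lra|lia] | left; lra | right; split; [lra|lia]].
Qed.

Lemma accepted_subst_potential l1 l2 (a b : lit) : valid_list n (l1 ++ a :: l2) -> (fst b < n)%nat ->
  accept_list n w (l1 ++ a :: l2) (l1 ++ b :: l2) = true ->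
  (potential n (l1 ++ b :: l2) <= potential n (l1 ++ a :: l2))%nat.
Proof.
  intros Hv0 Hb Ha. destruct (valid_list_remove n l1 l2 a Hv0) as [Hv Ha0].
  destruct (insert_balance n w l1 l2 a Ha0) as [E1 E2].
  destruct (insert_balance n w l1 l2 b Hb) as [F1 F2].
  pose proof (n_le_length_unexpressed n _ (valid_list_insert n l1 l2 b Hv Hb)).
  pose proof (w_pos _ Ha0). pose proof (w_pos _ Hb).
  assert (Hle : fitness n w (l1 ++ a :: l2) <= fitness n w (l1 ++ b :: l2))
    by (apply accept_list_spec in Ha; destruct Ha as [|[]]; lra).
  clear Ha. unfold potential in *. rewrite !length_app in *. simpl length in *. unfold lit in *.
  destruct (expressed (l1 ++ a :: l2) (fst a)), (expressed (l1 ++ l2) (fst a)),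
    (expressed (l1 ++ b :: l2) (fst b)), (expressed (l1 ++ l2) (fst b)); lia || lra.
Qed.

End Acceptance.

(** * The counting inequality: many improving mutations exist *)

(* Per variable with [p] positive and [q] negative leaves: its share
   [p + q + 2[unexpressed] - 1] of the potential is at most four times its
   number of safe leaves plus twice [1] if the variable is absent. *)
Lemma potential_share_le (p q : nat) :
  INR p + INR q + 2 * (if expressed_counts p q then 0 else 1) - 1 <=
  4 * (INR p * (if implb (expressed_counts p q) (expressed_counts (p - 1) q) then 1 else 0) +
       INR q * (if implb (expressed_counts p q) (expressed_counts p (q - 1)) then 1 else 0)) +
  2 * (if andb (p =? 0) (q =? 0) then 1 else 0).
Proof.
  assert (Hnat : (p + q + 2 * (if expressed_counts p q then 0 else 1) <=
    4 * (p * (if implb (expressed_counts p q) (expressed_counts (p - 1) q) then 1 else 0) +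
         q * (if implb (expressed_counts p q) (expressed_counts p (q - 1)) then 1 else 0)) +
    2 * (if andb (p =? 0) (q =? 0) then 1 else 0) + 1)%nat).
  { unfold expressed_counts.
    destruct (Nat.leb_spec 1 p), (Nat.leb_spec q p), (Nat.leb_spec 1 (p - 1)),
      (Nat.leb_spec q (p - 1)), (Nat.leb_spec (q - 1) p), (Nat.eqb_spec p 0),
      (Nat.eqb_spec q 0); simpl; lia. }
  apply le_INR in Hnat.
  destruct (expressed_counts (p - 1) q), (expressed_counts p (q - 1)),
    (expressed_counts p q), (andb (p =? 0) (q =? 0));
    repeat rewrite ?plus_INR, ?mult_INR in Hnat; simpl in Hnat |- *; lra.
Qed.

Lemma INR_potential n l : valid_list n l ->
  INR (potential n l) = sumR (seq 0 n) (fun i =>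
    INR (count_lit l i true) + INR (count_lit l i false)
    + 2 * (if expressed l i then 0 else 1) - 1).
Proof.
  intros Hv. pose proof (n_le_length_unexpressed n l Hv). unfold potential.
  rewrite minus_INR, plus_INR, mult_INR, INR_length_by_variable with (n := n),
    INR_n_unexpressed, (INR_as_sum n) by (auto || lia).
  rewrite (sumR_minus _ (fun i => INR (count_lit l i true) + INR (count_lit l i false)
                                   + 2 * (if expressed l i then 0 else 1)) (fun _ => 1)),
    (sumR_plus _ (fun i => INR (count_lit l i true) + INR (count_lit l i false))
                 (fun i => 2 * (if expressed l i then 0 else 1))),
    (sumR_scal _ 2 (fun i => if expressed l i then 0 else 1)).
  simpl (INR 2). lra.
Qed.

Lemma n_safe_by_variable n l : valid_list n l ->
  sumR l (fun x => if safe_leaf l x then 1 else 0) =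
  sumR (seq 0 n) (fun i =>
    INR (count_lit l i true) * (if implb (expressed l i)
      (expressed_counts (count_lit l i true - 1) (count_lit l i false)) then 1 else 0)
    + INR (count_lit l i false) * (if implb (expressed l i)
      (expressed_counts (count_lit l i true) (count_lit l i false - 1)) then 1 else 0)).
Proof.
  intros Hv. rewrite (sumR_by_variable n l _ Hv). apply sumR_ext. intros i _.
  unfold safe_leaf. simpl fst; simpl snd. rewrite !Nat.sub_0_r. reflexivity.
Qed.

Lemma n_absent_by_variable n l :
  sumR (terminals n) (fun u => if absent_pos l u then 1 else 0) =
  sumR (seq 0 n) (fun i => if andb (count_lit l i true =? 0) (count_lit l i false =? 0) then 1 else 0).
Proof.
  rewrite sumR_terminals. apply sumR_ext. intros i _. unfold absent_pos; simpl.
  destruct (andb _ _); lra.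
Qed.

Lemma potential_le_safe_absent n l : valid_list n l ->
  INR (potential n l) <= 4 * sumR l (fun x => if safe_leaf l x then 1 else 0)
                        + 2 * sumR (terminals n) (fun u => if absent_pos l u then 1 else 0).
Proof.
  intros Hv. rewrite (INR_potential n), (n_safe_by_variable n), n_absent_by_variable by auto.
  rewrite <- !sumR_scal, <- sumR_plus. apply sumR_le. intros i _. apply potential_share_le.
Qed.

Lemma fitness_le_total n w l : (forall i, (i < n)%nat -> 0 < w i) ->
  fitness n w l <= sumR (seq 0 n) w.
Proof.
  intros Hw. apply sumR_le. intros i Hi. apply in_seq in Hi.
  pose proof (Hw i ltac:(lia)). destruct (expressed l i); lra.
Qed.

Lemma total_fitness_all_expressed n w l : (forall i, (i < n)%nat -> 0 < w i) ->
  fitness n w l = sumR (seq 0 n) w -> n_unexpressed n l = 0%nat.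
Proof.
  intros Hw H. unfold n_unexpressed.
  destruct (filter (fun i => negb (expressed l i)) (seq 0 n)) as [|i r] eqn:F; [reflexivity|].
  exfalso.
  assert (HI : In i (filter (fun i => negb (expressed l i)) (seq 0 n))) by (rewrite F; simpl; auto).
  apply filter_In in HI as [HI Hn]. pose proof HI as HI'. apply in_seq in HI'.
  assert (E : sumR (seq 0 n) w - fitness n w l
              = sumR (seq 0 n) (fun j => if expressed l j then 0 else w j)).
  { unfold fitness. rewrite <- sumR_minus. apply sumR_ext. intros j _. destruct (expressed l j); lra. }
  assert (w i <= sumR (seq 0 n) (fun j => if expressed l j then 0 else w j)).
  { replace (w i) with (if expressed l i then 0 else w i)
      by (destruct (expressed l i); [discriminate|reflexivity]).
    apply sumR_ge_term with (f := fun j => if expressed l j then 0 else w j); auto.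
    intros j Hj. apply in_seq in Hj. pose proof (Hw j ltac:(lia)). destruct (expressed l j); lra. }
  pose proof (Hw i ltac:(lia)). lra.
Qed.

(* With potential 0 every variable is expressed using only [n] leaves: the
   fitness is maximal, and any other tree of maximal fitness needs at least
   [n] leaves. *)
Lemma potential_zero_optimal n w X : (forall i, (i < n)%nat -> 0 < w i) ->
  valid n X -> potential n (leaflist X) = 0%nat -> optimal n w X.
Proof.
  intros Hw Hv H0. pose proof (n_le_length_unexpressed n _ Hv). unfold potential in H0.
  assert (Hu : n_unexpressed n (leaflist X) = 0%nat) by lia.
  assert (Ew : fitness n w (leaflist X) = sumR (seq 0 n) w).
  { apply sumR_ext. intros i Hi. apply in_seq in Hi.
    destruct (expressed (leaflist X) i) eqn:E; [reflexivity|exfalso].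
    assert (In i (filter (fun i => negb (expressed (leaflist X) i)) (seq 0 n)))
      by (apply filter_In; split; [apply in_seq; lia|rewrite E; reflexivity]).
    unfold n_unexpressed in Hu. destruct (filter _ _); [contradiction|discriminate]. }
  split.
  - intros Y HY. rewrite !wmaj_fitness, Ew. apply fitness_le_total; auto.
  - intros Y HY HE. rewrite !wmaj_fitness, Ew in HE. apply total_fitness_all_expressed in HE; auto.
    pose proof (n_le_length_unexpressed n _ HY). rewrite !cplx_leaflist. lia.
Qed.

(** * The drift function *)

Fixpoint harmonic (m : nat) : R :=
  match m with O => 0 | S m' => harmonic m' + / INR (S m') end.

Lemma harmonic_mono m' m : (m' <= m)%nat -> harmonic m' <= harmonic m.
Proof.
  induction 1; [lra|]. cbn [harmonic].
  assert (0 < / INR (S m)) by (apply Rinv_0_lt_compat, lt_0_INR; lia). lra.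
Qed.

Lemma ln_le_sub1 t : 0 < t -> ln t <= t - 1.
Proof. intros Ht. pose proof (exp_ineq1_le (ln t)) as H. rewrite exp_ln in H; lra. Qed.

(* [ln (a / b) <= a / b - 1], in the form used below. *)
Lemma ln_ratio_le a b : 0 < a -> 0 < b -> ln a <= ln b + (a - b) / b.
Proof.
  intros Ha Hb. pose proof (ln_le_sub1 (a / b) ltac:(apply Rdiv_lt_0_compat; auto)) as L.
  unfold Rdiv in L. rewrite ln_mult, ln_Rinv in L by (auto || apply Rinv_0_lt_compat; auto).
  replace ((a - b) / b) with (a * / b - 1) by (field; lra). lra.
Qed.

Lemma harmonic_le_ln m : (1 <= m)%nat -> harmonic m <= 1 + ln (INR m).
Proof.
  induction m as [|m IH]; intros Hm; [lia|].
  destruct m as [|k]; [simpl; rewrite ln_1; lra|].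
  specialize (IH ltac:(lia)). cbn [harmonic] in *.
  assert (Hk : 0 < INR (S k)) by (apply lt_0_INR; lia).
  assert (E : INR (S (S k)) = INR (S k) + 1) by (rewrite S_INR; reflexivity).
  pose proof (ln_ratio_le (INR (S k)) (INR (S (S k))) Hk ltac:(lra)) as L.
  replace ((INR (S k) - INR (S (S k))) / INR (S (S k))) with (- / INR (S (S k))) in L
    by (rewrite E; field; lra).
  lra.
Qed.

(* The drift function [G_n(m) = 12 (m + n H_m)]: its increment from [m - 1]
   to [m] is [12 (m + n) / m], the reciprocal of a lower bound on the
   probability of an improving step at potential [m], scaled by 12. *)
Definition Gpot (n m : nat) : R := 12 * (INR m + INR n * harmonic m).

Definition step_size (n m : nat) : R := 12 * (INR m + INR n) / INR m.

Lemma Gpot_mono n m' m : (m' <= m)%nat -> Gpot n m' <= Gpot n m.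
Proof.
  intros H. unfold Gpot. pose proof (harmonic_mono m' m H). pose proof (le_INR _ _ H).
  pose proof (pos_INR n). nra.
Qed.

Lemma Gpot_nonneg n m : 0 <= Gpot n m.
Proof.
  replace 0 with (Gpot n 0) by (unfold Gpot; simpl; lra). apply Gpot_mono. lia.
Qed.

Lemma Gpot_drop n m' m : (m' + 1 <= m)%nat -> step_size n m <= Gpot n m - Gpot n m'.
Proof.
  intros H. destruct m as [|k]; [lia|].
  pose proof (harmonic_mono m' k ltac:(lia)). pose proof (le_INR m' k ltac:(lia)).
  assert (Hk : 0 < INR (S k)) by (apply lt_0_INR; lia).
  assert (E : INR (S k) = INR k + 1) by apply S_INR.
  pose proof (pos_INR n).
  unfold Gpot, step_size. cbn [harmonic].
  replace (12 * (INR (S k) + INR n) / INR (S k)) with (12 + 12 * INR n * / INR (S k))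
    by (field; lra).
  nra.
Qed.

Lemma n_le_nlnn n : (1 <= n)%nat -> INR n <= 1 + 2 * INR n * ln (INR n).
Proof.
  intros H. destruct (Nat.eq_dec n 1) as [->|Hn]; [simpl; rewrite ln_1; lra|].
  assert (2 <= INR n) by (replace 2 with (INR 2) by (simpl; lra); apply le_INR; lia).
  assert (ln 2 <= ln (INR n)) by (destruct (Rle_lt_or_eq_dec _ _ H0) as [?|<-];
                                   [left; apply ln_increasing; lra|lra]).
  pose proof ln_lt_2. nra.
Qed.

Lemma Gpot_bound n C m : (1 <= n)%nat -> (m <= C + n)%nat ->
  Gpot n m <= 60 * (INR C + INR n * ln (INR n) + 1).
Proof.
  intros Hn Hm. apply Rle_trans with (Gpot n (C + n)); [apply Gpot_mono; auto|].
  unfold Gpot. rewrite plus_INR.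
  assert (Hn1 : 1 <= INR n) by (replace 1 with (INR 1) by reflexivity; apply le_INR; lia).
  pose proof (pos_INR C).
  pose proof (harmonic_le_ln (C + n) ltac:(lia)) as HB. rewrite plus_INR in HB.
  pose proof (ln_ratio_le (INR C + INR n) (INR n) ltac:(lra) ltac:(lra)) as Hl.
  replace (INR C + INR n - INR n) with (INR C) in Hl by ring.
  assert (INR n * ln (INR C + INR n) <= INR n * ln (INR n) + INR C).
  { replace (INR C) with (INR n * (INR C / INR n)) at 2 by (field; lra).
    rewrite <- Rmult_plus_distr_l. apply Rmult_le_compat_l; lra. }
  pose proof (n_le_nlnn n Hn).
  assert (0 <= ln (INR n)) by (rewrite <- ln_1; destruct (Rle_lt_or_eq_dec _ _ Hn1) as [?|<-];
                               [left; apply ln_increasing; lra|lra]).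
  nra.
Qed.

Lemma mutate_in_subst n s j u : (j < nleaves s)%nat -> In u (terminals n) ->
  In (/3 * / INR (nleaves s) * / INR (length (terminals n)), Some (subst_at s j u))
     (mutate n (Some s)).
Proof.
  intros Hj Hu. unfold mutate; cbv zeta. apply in_or_app; left.
  apply in_flat_map. exists j. split; [apply in_seq; lia|]. apply in_map_iff. exists u; auto.
Qed.

Lemma mutate_in_insert n s k u b : (k < ssize s)%nat -> In u (terminals n) ->
  In (/3 * / INR (ssize s) * / INR (length (terminals n)) * / 2, Some (insert_at s k u b))
     (mutate n (Some s)).
Proof.
  intros Hk Hu. unfold mutate; cbv zeta. apply in_or_app; right. apply in_or_app; left.
  apply in_flat_map. exists k. split; [apply in_seq; lia|]. apply in_flat_map. exists u.
  split; auto. apply in_map_iff. exists b. split; auto. destruct b; simpl; auto.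
Qed.

Lemma mutate_in_delete n s j : (j < nleaves s)%nat ->
  In (/3 * / INR (nleaves s), delete_at s j) (mutate n (Some s)).
Proof.
  intros Hj. unfold mutate; cbv zeta. apply in_or_app; right. apply in_or_app; right.
  apply in_map_iff. exists j. split; auto. apply in_seq; lia.
Qed.

Lemma mutate_in_leaf n u : In u (terminals n) ->
  In (/3 * / INR (length (terminals n)), Some (Leaf (fst u) (snd u))) (mutate n None).
Proof.
  intros Hu. unfold mutate. apply in_or_app; right. apply in_or_app; left.
  apply in_map_iff. exists u; auto.
Qed.

Lemma sumR_mutate_some n s F :
  sumR (mutate n (Some s)) F =
  sumR (seq 0 (nleaves s)) (fun j => sumR (terminals n) (fun u =>
     F (/3 * / INR (nleaves s) * / INR (length (terminals n)), Some (subst_at s j u))))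
  + sumR (seq 0 (ssize s)) (fun k => sumR (terminals n) (fun u =>
      sumR (true :: false :: nil) (fun b =>
        F (/3 * / INR (ssize s) * / INR (length (terminals n)) * / 2, Some (insert_at s k u b)))))
  + sumR (seq 0 (nleaves s)) (fun j => F (/3 * / INR (nleaves s), delete_at s j)).
Proof.
  unfold mutate. cbv zeta. rewrite !sumR_app, !sumR_flat_map, sumR_map, Rplus_assoc. f_equal.
  - apply sumR_ext; intros. rewrite sumR_map. reflexivity.
  - f_equal. apply sumR_ext; intros. rewrite sumR_flat_map.
    apply sumR_ext; intros. rewrite sumR_map. reflexivity.
Qed.

Lemma sumR_mutate_none n F :
  sumR (mutate n None) F = F (/3, None) + sumR (terminals n) (fun u =>
     F (/3 * / INR (length (terminals n)), Some (Leaf (fst u) (snd u)))) + F (/3, None).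
Proof.
  unfold mutate. rewrite !sumR_app, sumR_map.
  change (sumR ((/3, None) :: nil) F) with (F (/3, None) + 0). unfold lit. lra.
Qed.

Lemma mutate_prob_total n X : (1 <= n)%nat -> sumR (mutate n X) fst = 1.
Proof.
  intros Hn. assert (0 < INR n) by (apply lt_0_INR; lia).
  destruct X as [s|].
  - rewrite sumR_mutate_some. cbn [fst]. rewrite !sumR_const, !length_seq, terminals_length.
    assert (0 < INR (nleaves s)) by (apply lt_0_INR; pose proof (nleaves_pos s); lia).
    assert (0 < INR (ssize s)) by (apply lt_0_INR; pose proof (ssize_pos s); lia).
    simpl (length (true :: false :: nil)). simpl (INR 2). field. lra.
  - rewrite sumR_mutate_none. cbn [fst]. rewrite sumR_const, terminals_length. field. lra.
Qed.

Lemma mutate_prob_nonneg n X pY : (1 <= n)%nat -> In pY (mutate n X) -> 0 <= fst pY.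
Proof.
  intros Hn HpY.
  assert (Hm : 0 < / INR (length (terminals n)))
    by (apply Rinv_0_lt_compat; rewrite terminals_length; apply Rmult_lt_0_compat;
        [lra|apply lt_0_INR; lia]).
  unfold mutate in HpY; cbv zeta in HpY. destruct X as [s|].
  - assert (0 < / INR (nleaves s))
      by (apply Rinv_0_lt_compat, lt_0_INR; pose proof (nleaves_pos s); lia).
    assert (0 < / INR (ssize s))
      by (apply Rinv_0_lt_compat, lt_0_INR; pose proof (ssize_pos s); lia).
    repeat (apply in_app_or in HpY as [HpY|HpY] || apply in_flat_map in HpY as (? & _ & HpY)
            || apply in_map_iff in HpY as (? & <- & _)); simpl; nra.
  - repeat (apply in_app_or in HpY as [HpY|HpY] || apply in_map_iff in HpY as (? & <- & _));
      try (destruct HpY as [<-|[]]); simpl; nra.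
Qed.

Inductive leaf_change n : list lit -> list lit -> Prop :=
| change_none l : leaf_change n l l
| change_subst l1 a l2 u : In u (terminals n) -> leaf_change n (l1 ++ a :: l2) (l1 ++ u :: l2)
| change_insert l1 l2 u : In u (terminals n) -> leaf_change n (l1 ++ l2) (l1 ++ u :: l2)
| change_delete l1 a l2 : leaf_change n (l1 ++ a :: l2) (l1 ++ l2).

Lemma mutate_leaf_change n X pY :
  In pY (mutate n X) -> leaf_change n (leaflist X) (leaflist (snd pY)).
Proof.
  intros HpY. unfold mutate in HpY; cbv zeta in HpY. destruct X as [s|].
  - apply in_app_or in HpY as [HpY|HpY]; [|apply in_app_or in HpY as [HpY|HpY]].
    + apply in_flat_map in HpY as (j & Hj & HpY). apply in_map_iff in HpY as (u & <- & Hu).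
      apply in_seq in Hj. destruct (leaves_subst_at s j u ltac:(lia)) as (l1 & a & l2 & E1 & E2).
      simpl. rewrite E1, E2. apply change_subst. destruct u; exact Hu.
    + apply in_flat_map in HpY as (k & _ & HpY). apply in_flat_map in HpY as (u & Hu & HpY).
      apply in_map_iff in HpY as (b & <- & _).
      destruct (leaves_insert_at s k u b) as (l1 & l2 & E1 & E2).
      simpl. rewrite E1, E2. apply change_insert. destruct u; exact Hu.
    + apply in_map_iff in HpY as (j & <- & Hj). apply in_seq in Hj.
      destruct (leaves_delete_at s j ltac:(lia)) as (l1 & a & l2 & E1 & _ & E3).
      simpl. rewrite E1, E3. apply change_delete.
  - apply in_app_or in HpY as [[<-|[]]|HpY]; [apply change_none|].
    apply in_app_or in HpY as [HpY|[<-|[]]]; [|apply change_none].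
    apply in_map_iff in HpY as (u & <- & Hu).
    apply (change_insert n nil nil (fst u, snd u)). destruct u; exact Hu.
Qed.

Lemma leaf_change_valid n l l' : leaf_change n l l' -> valid_list n l -> valid_list n l'.
Proof.
  intros [| l1 a l2 u Hu | l1 l2 u Hu | l1 a l2] Hv; auto.
  - apply valid_list_insert; [apply (valid_list_remove n l1 l2 a Hv)|apply terminals_valid; auto].
  - apply valid_list_insert; [auto|apply terminals_valid; auto].
  - apply (valid_list_remove n l1 l2 a Hv).
Qed.

Lemma leaf_change_accepted_potential n w l l' : (forall i, (i < n)%nat -> 0 < w i) ->
  leaf_change n l l' -> valid_list n l -> accept_list n w l l' = true ->
  (potential n l' <= potential n l)%nat.
Proof.
  intros Hw [| l1 a l2 u Hu | l1 l2 u Hu | l1 a l2] Hv Ha; auto.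
  - apply (accepted_subst_potential n w Hw); auto. apply terminals_valid; auto.
  - pose proof (accepted_insert_potential n w Hw l1 l2 u Hv (terminals_valid n u Hu) Ha). lia.
  - pose proof (accepted_delete_potential n w Hw l1 l2 a Hv Ha). lia.
Qed.

Section Drift.
Variable n : nat.
Variable w : nat -> R.
Hypothesis n_pos : (1 <= n)%nat.
Hypothesis w_pos : forall i, (i < n)%nat -> 0 < w i.

Definition next X Y : tree := if accept n w X Y then Y else X.

Definition pot (X : tree) : nat := potential n (leaflist X).

Definition gain X Y : R := Gpot n (pot X) - Gpot n (pot (next X Y)).

(* Since accepted offspring never raise the potential, gains are nonnegative. *)
Lemma gain_nonneg X pY : valid n X -> In pY (mutate n X) -> 0 <= gain X (snd pY).
Proof.
  intros Hv HpY. unfold gain, next. destruct (accept n w X (snd pY)) eqn:Ha; [|lra].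
  rewrite accept_leaflist in Ha.
  pose proof (leaf_change_accepted_potential n w (leaflist X) (leaflist (snd pY)) w_pos
                (mutate_leaf_change n X pY HpY) Hv Ha).
  pose proof (Gpot_mono n _ _ H). unfold pot. lra.
Qed.

Lemma gain_progress X Y : accept n w X Y = true -> (pot Y + 1 <= pot X)%nat ->
  step_size n (pot X) <= gain X Y.
Proof. intros Ha Hp. unfold gain, next. rewrite Ha. apply Gpot_drop; auto. Qed.

Lemma weighted_gain c d g (b : bool) : 0 <= c -> 0 <= g -> (b = true -> d <= g) ->
  c * d * (if b then 1 else 0) <= c * g.
Proof. intros Hc Hg H. destruct b; [specialize (H eq_refl)|]; nra. Qed.

Lemma insert_absent_gain s k u b : valid n (Some s) -> In u (terminals n) ->
  absent_pos (leaves s) u = true ->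
  step_size n (pot (Some s)) <= gain (Some s) (Some (insert_at s k u b)).
Proof.
  intros Hv Hu Habs. destruct (leaves_insert_at s k u b) as (l1 & l2 & E1 & E2).
  pose proof (terminals_valid n u Hu) as Hun.
  assert (Ha : accept_list n w (l1 ++ l2) (l1 ++ (fst u, snd u) :: l2) = true).
  { apply absent_insert_accepted; auto. rewrite <- E1. destruct u; exact Habs. }
  apply gain_progress.
  - rewrite accept_leaflist. simpl leaflist. rewrite E1, E2. exact Ha.
  - unfold pot; simpl leaflist. rewrite E1, E2.
    pose proof (accepted_insert_potential n w w_pos l1 l2 (fst u, snd u)) as P.
    rewrite <- E1 in P. specialize (P Hv Hun). rewrite E1 in P. specialize (P Ha).
    unfold lit in *. lia.
Qed.

Lemma delete_safe_gain s j d : valid n (Some s) -> (j < nleaves s)%nat ->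
  safe_leaf (leaves s) (nth j (leaves s) d) = true ->
  step_size n (pot (Some s)) <= gain (Some s) (delete_at s j).
Proof.
  intros Hv Hj Hs. destruct (leaves_delete_at s j Hj) as (l1 & a & l2 & E1 & E2 & E3).
  assert (Hnth : nth j (leaves s) d = a) by (rewrite E1, <- E2; apply nth_middle).
  assert (Hv' : valid_list n (l1 ++ a :: l2)) by (red in Hv; simpl in Hv; rewrite <- E1; exact Hv).
  rewrite Hnth, E1 in Hs.
  assert (Ha : accept_list n w (l1 ++ a :: l2) (l1 ++ l2) = true)
    by (apply safe_delete_accepted; auto).
  apply gain_progress.
  - rewrite accept_leaflist. simpl leaflist. rewrite E1, E3. exact Ha.
  - unfold pot; simpl leaflist. rewrite E1, E3.
    apply (accepted_delete_potential n w w_pos l1 l2 a Hv' Ha).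
Qed.

Lemma insertion_part_gain s : valid n (Some s) ->
  step_size n (pot (Some s)) * sumR (terminals n) (fun u => if absent_pos (leaves s) u then 1 else 0)
    / (6 * INR n)
  <= sumR (seq 0 (ssize s)) (fun k => sumR (terminals n) (fun u => sumR (true :: false :: nil)
       (fun b => /3 * / INR (ssize s) * / INR (length (terminals n)) * / 2
                 * gain (Some s) (Some (insert_at s k u b))))).
Proof.
  intros Hv. set (c := /3 * / INR (ssize s) * / INR (length (terminals n)) * / 2).
  set (d := step_size n (pot (Some s))).
  assert (HK : 0 < INR (ssize s)) by (apply lt_0_INR; pose proof (ssize_pos s); lia).
  assert (Hn : 0 < INR n) by (apply lt_0_INR; lia).
  assert (Ec : c = / (12 * INR (ssize s) * INR n))
    by (unfold c; rewrite terminals_length; field; lra).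
  assert (Hc : 0 <= c) by (rewrite Ec; left; apply Rinv_0_lt_compat; nra).
  assert (Hterm : forall k u b, (k < ssize s)%nat -> In u (terminals n) ->
            c * d * (if absent_pos (leaves s) u then 1 else 0)
            <= c * gain (Some s) (Some (insert_at s k u b))).
  { intros k u b Hk Hu. apply weighted_gain; auto.
    - apply (gain_nonneg _ (c, _) Hv (mutate_in_insert n s k u b Hk Hu)).
    - intros Habs. apply insert_absent_gain; auto. }
  apply Rle_trans with (sumR (seq 0 (ssize s)) (fun k => sumR (terminals n) (fun u =>
       2 * (c * d * (if absent_pos (leaves s) u then 1 else 0))))).
  - rewrite sumR_const, length_seq, sumR_scal, sumR_scal, Ec.
    right. field. lra.
  - apply sumR_le. intros k Hk. apply in_seq in Hk. apply sumR_le. intros u Hu.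
    unfold sumR; simpl. pose proof (Hterm k u true ltac:(lia) Hu).
    pose proof (Hterm k u false ltac:(lia) Hu). lra.
Qed.

Lemma deletion_part_gain s : valid n (Some s) ->
  step_size n (pot (Some s)) * sumR (leaves s) (fun x => if safe_leaf (leaves s) x then 1 else 0)
    / (3 * INR (nleaves s))
  <= sumR (seq 0 (nleaves s)) (fun j => /3 * / INR (nleaves s) * gain (Some s) (delete_at s j)).
Proof.
  intros Hv. set (c := /3 * / INR (nleaves s)). set (d := step_size n (pot (Some s))).
  assert (HL : 0 < INR (nleaves s)) by (apply lt_0_INR; pose proof (nleaves_pos s); lia).
  assert (Hc : 0 <= c) by (unfold c; left; apply Rmult_lt_0_compat; [lra|apply Rinv_0_lt_compat; lra]).
  rewrite <- (sumR_nth (leaves s) (0%nat, true)).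
  replace (d * sumR (seq 0 (length (leaves s)))
             (fun j => if safe_leaf (leaves s) (nth j (leaves s) (0%nat, true)) then 1 else 0)
           / (3 * INR (nleaves s)))
    with (sumR (seq 0 (nleaves s)) (fun j =>
            c * d * (if safe_leaf (leaves s) (nth j (leaves s) (0%nat, true)) then 1 else 0)))
    by (rewrite sumR_scal; unfold c, nleaves in *; field; lra).
  apply sumR_le. intros j Hj. apply in_seq in Hj. apply weighted_gain; auto.
  - apply (gain_nonneg _ (_, _) Hv (mutate_in_delete n s j ltac:(lia))).
  - intros Hs. apply (delete_safe_gain s j (0%nat, true)); auto. lia.
Qed.

Lemma one_le_div a b : 0 < b -> b <= a -> 1 <= a / b.
Proof.
  intros Hb Hab. replace (a / b) with (1 + (a - b) * / b) by (field; lra).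
  assert (0 <= (a - b) * / b) by (apply Rmult_le_pos; [lra|left; apply Rinv_0_lt_compat; lra]).
  lra.
Qed.

Lemma drift_arith P L A D : 1 <= P -> 1 <= INR n -> 1 <= L -> L <= P + INR n ->
  0 <= A -> 0 <= D -> P <= 4 * D + 2 * A ->
  1 <= 12 * (P + INR n) / P * A / (6 * INR n) + 12 * (P + INR n) / P * D / (3 * L).
Proof.
  intros HP Hn HL HLP HA HD Hkey.
  replace (12 * (P + INR n) / P * A / (6 * INR n) + 12 * (P + INR n) / P * D / (3 * L))
    with ((2 * A * ((P + INR n) / INR n) + 4 * D * ((P + INR n) / L)) / P) by (field; lra).
  assert (1 <= (P + INR n) / INR n) by (apply one_le_div; lra).
  assert (1 <= (P + INR n) / L) by (apply one_le_div; lra).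
  apply one_le_div; [lra|]. nra.
Qed.

Lemma step_size_ge_12 m : (1 <= m)%nat -> 12 <= step_size n m.
Proof.
  intros Hm. assert (1 <= INR m) by (apply (le_INR 1); auto). unfold step_size.
  replace (12 * (INR m + INR n) / INR m) with (12 * ((INR m + INR n) / INR m)) by (field; lra).
  assert (1 <= (INR m + INR n) / INR m) by (apply one_le_div; pose proof (pos_INR n); lra).
  lra.
Qed.

(* Drift from a nonempty tree: substitutions contribute a nonnegative
   amount, insertions and deletions enough by the counting inequality. *)
Lemma expected_gain_nonempty s : valid n (Some s) -> (1 <= pot (Some s))%nat ->
  1 <= sumR (mutate n (Some s)) (fun pY => fst pY * gain (Some s) (snd pY)).
Proof.
  intros Hv HP. rewrite sumR_mutate_some. cbn [fst snd].
  assert (Hsubst : 0 <= sumR (seq 0 (nleaves s)) (fun j => sumR (terminals n) (fun u =>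
     /3 * / INR (nleaves s) * / INR (length (terminals n)) * gain (Some s) (Some (subst_at s j u))))).
  { apply sumR_nonneg. intros j Hj. apply sumR_nonneg. intros u Hu. apply in_seq in Hj.
    pose proof (mutate_in_subst n s j u ltac:(lia) Hu) as M.
    apply Rmult_le_pos; [exact (mutate_prob_nonneg n _ _ n_pos M)|exact (gain_nonneg _ _ Hv M)]. }
  pose proof (insertion_part_gain s Hv). pose proof (deletion_part_gain s Hv).
  set (A := sumR (terminals n) (fun u => if absent_pos (leaves s) u then 1 else 0)) in *.
  set (D := sumR (leaves s) (fun x => if safe_leaf (leaves s) x then 1 else 0)) in *.
  assert (HA : 0 <= A) by (apply sumR_nonneg; intros; destruct (absent_pos _ _); lra).
  assert (HD : 0 <= D) by (apply sumR_nonneg; intros; destruct (safe_leaf _ _); lra).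
  assert (Hkey : INR (pot (Some s)) <= 4 * D + 2 * A)
    by exact (potential_le_safe_absent n (leaves s) Hv).
  assert (HLP : INR (nleaves s) <= INR (pot (Some s)) + INR n).
  { rewrite <- plus_INR. apply le_INR. unfold nleaves, pot; simpl leaflist.
    pose proof (potential_bounds n (leaves s)). lia. }
  pose proof (drift_arith (INR (pot (Some s))) (INR (nleaves s)) A D
    ltac:(apply (le_INR 1); auto) ltac:(apply (le_INR 1); auto)
    ltac:(apply (le_INR 1), nleaves_pos) HLP HA HD Hkey).
  unfold step_size in *. lra.
Qed.

(* Drift from the empty tree: each of the [n] positive leaves is an
   improving insertion, chosen with probability [1 / (6 n)]. *)
Lemma expected_gain_empty : (1 <= pot None)%nat ->
  1 <= sumR (mutate n None) (fun pY => fst pY * gain None (snd pY)).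
Proof.
  intros HP. rewrite sumR_mutate_none. cbn [fst snd].
  assert (Hstay : gain None None = 0) by (unfold gain, next; destruct (accept n w None None); lra).
  rewrite Hstay.
  set (c := /3 * / INR (length (terminals n))).
  set (d := step_size n (pot None)).
  assert (Hn : 1 <= INR n) by (apply (le_INR 1); auto).
  assert (Ec : c = / (6 * INR n)) by (unfold c; rewrite terminals_length; field; lra).
  assert (Hleaf : forall u, In u (terminals n) -> c * d * (if snd u then 1 else 0)
                    <= c * gain None (Some (Leaf (fst u) (snd u)))).
  { intros u Hu. pose proof (mutate_in_leaf n u Hu) as M.
    pose proof (terminals_valid n u Hu) as Hun.
    apply weighted_gain;
      [exact (mutate_prob_nonneg n _ _ n_pos M)|exact (gain_nonneg None _ (valid_nil n) M)|].
    intros Hs.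
    assert (Ha : accept_list n w (nil ++ nil) (nil ++ (fst u, snd u) :: nil) = true).
    { apply absent_insert_accepted; auto. unfold absent_pos. simpl. rewrite Hs. reflexivity. }
    pose proof (accepted_insert_potential n w w_pos nil nil (fst u, snd u) (valid_nil n) Hun Ha) as P.
    apply gain_progress; [rewrite accept_leaflist; exact Ha|].
    unfold pot; simpl leaflist. simpl app in P. unfold lit in *. lia. }
  assert (Hpos : INR n = sumR (terminals n) (fun u => if snd u then 1 else 0))
    by (rewrite sumR_terminals, INR_as_sum; apply sumR_ext; intros; simpl; lra).
  assert (c * d * INR n <= sumR (terminals n) (fun u => c * gain None (Some (Leaf (fst u) (snd u)))))
    by (rewrite Hpos, <- sumR_scal; apply sumR_le; auto).
  replace (c * d * INR n) with (d / 6) in H by (rewrite Ec; field; lra).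
  assert (12 <= d) by (apply step_size_ge_12; auto). lra.
Qed.

Lemma expected_gain_ge_1 X : valid n X -> (1 <= pot X)%nat ->
  1 <= sumR (mutate n X) (fun pY => fst pY * gain X (snd pY)).
Proof.
  destruct X as [s|]; intros Hv HP;
    [apply expected_gain_nonempty | apply expected_gain_empty]; auto.
Qed.

End Drift.

(** * Additive drift *)

Lemma surv_optimal n w t X : optimal n w X -> surv n w t X = 0.
Proof. intros H. destruct t; simpl; destruct (excluded_middle_informative (optimal n w X)); tauto. Qed.

Lemma surv_step n w t X : ~ optimal n w X ->
  surv n w (S t) X = sumR (mutate n X) (fun pY => fst pY * surv n w t (next n w X (snd pY))).
Proof. intros H. simpl; destruct (excluded_middle_informative (optimal n w X)); tauto. Qed.

Lemma additive_drift n w (Inv : tree -> Prop) (g : tree -> R) :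
  (forall X, Inv X -> 0 <= g X) ->
  (forall X pY, Inv X -> In pY (mutate n X) -> 0 <= fst pY /\ Inv (snd pY)) ->
  (forall X, Inv X -> ~ optimal n w X ->
     sumR (mutate n X) (fun pY => fst pY * g (next n w X (snd pY))) <= g X - 1) ->
  forall N X, Inv X -> exp_time_partial n w X N <= g X.
Proof.
  intros g_nonneg step_inv drift.
  induction N as [|N IH]; intros X HX; [simpl; apply g_nonneg; auto|].
  change (exp_time_partial n w X (S N)) with (sumR (seq 0 (S N)) (fun t => surv n w t X)).
  destruct (excluded_middle_informative (optimal n w X)) as [Ho|Ho].
  - rewrite (sumR_ext _ _ (fun _ => 0)) by (intros; apply surv_optimal; auto).
    rewrite sumR_const. pose proof (g_nonneg X HX). lra.
  - change (surv n w 0 X + sumR (seq 1 N) (fun t => surv n w t X) <= g X).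
    rewrite <- seq_shift, sumR_map.
    replace (surv n w 0 X) with 1
      by (simpl; destruct (excluded_middle_informative (optimal n w X)); tauto).
    rewrite (sumR_ext _ _ (fun t => sumR (mutate n X) (fun pY =>
               fst pY * surv n w t (next n w X (snd pY))))) by (intros; apply surv_step; auto).
    rewrite sumR_swap.
    assert (sumR (mutate n X) (fun pY => sumR (seq 0 N) (fun t =>
                fst pY * surv n w t (next n w X (snd pY))))
            <= sumR (mutate n X) (fun pY => fst pY * g (next n w X (snd pY)))).
    { apply sumR_le. intros pY HpY. rewrite sumR_scal.
      destruct (step_inv X pY HX HpY) as [Hp HY].
      apply Rmult_le_compat_l; auto. apply IH.
      unfold next. destruct (accept n w X (snd pY)); auto. }
    pose proof (drift X HX Ho). lra.
Qed.

(* The drift condition for [g X = Gpot n (pot X)]: subtract the expected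
   gain (at least 1) from the total probability 1. *)
Lemma Gpot_drift n w : (1 <= n)%nat -> (forall i, (i < n)%nat -> 0 < w i) ->
  forall X, valid n X -> ~ optimal n w X ->
  sumR (mutate n X) (fun pY => fst pY * Gpot n (pot n (next n w X (snd pY))))
  <= Gpot n (pot n X) - 1.
Proof.
  intros Hn Hw X Hv Ho.
  assert (HP : (1 <= pot n X)%nat).
  { destruct (pot n X) eqn:E; [|lia]. exfalso. apply Ho. apply potential_zero_optimal; auto. }
  pose proof (expected_gain_ge_1 n w Hn Hw X Hv HP) as Hgain.
  rewrite (sumR_ext _ _ (fun pY => Gpot n (pot n X) * fst pY - fst pY * gain n w X (snd pY)))
    by (intros; unfold gain; ring).
  rewrite sumR_minus, sumR_scal, mutate_prob_total by auto. lra.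
Qed.

Theorem theorem3 :
  exists c : R, 0 < c /\
    forall (n : nat) (w : nat -> R) (X : tree),
      (1 <= n)%nat ->
      (forall i, (i < n)%nat -> 0 < w i) ->
      (forall i, (S i < n)%nat -> w (S i) <= w i) ->
      valid n X ->
      forall N : nat,
        exp_time_partial n w X N <= c * (INR (cplx X) + INR n * ln (INR n) + 1).
Proof.
  exists 60. split; [lra|].
  intros n w X Hn Hw _ Hv N.
  apply Rle_trans with (Gpot n (pot n X)).
  - apply (additive_drift n w (valid n) (fun X => Gpot n (pot n X))).
    + intros; apply Gpot_nonneg.
    + intros Y pY HY HpY. split; [exact (mutate_prob_nonneg n Y pY Hn HpY)|].
      exact (leaf_change_valid n _ _ (mutate_leaf_change n Y pY HpY) HY).
    + apply Gpot_drift; auto.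
    + exact Hv.
  - (* the initial potential is at most |leaves| + n <= C(X) + n *)
    apply Gpot_bound; auto. unfold pot.
    pose proof (potential_bounds n (leaflist X)) as [_ H]. rewrite cplx_leaflist. lia.
Qed.
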